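(* Let $N>0$ and let $E$ be a set of integers of cardinality at most $2^N$. Then there is a set $B=\{b_i\}_{i\in\mathbb{Z}}$ of integers such that (i) the sets $b_i+E$, $i\in\mathbb{Z}$, are pairwise disjoint; (ii) $b_i\in[i4^{N+1},(i+1)4^{N+1})$ for every $i\in\mathbb{Z}$; and (iii) $\mathbb{Z}=\bigcup_{n=-4^{N+1}}^{4^{N+1}}(n+B)$. *)

From HB Require Import structures.
From mathcomp Require Import all_boot all_order all_algebra.
From mathcomp Require Export finmap.
Set Implicit Arguments.
Unset Strict Implicit.
Unset Printing Implicit Defensive.

From HB Require Import structures.
From mathcomp Require Import all_boot all_order all_algebra finmap.
From mathcomp Require Import zify.
Set Implicit Arguments.
Unset Strict Implicit.
Unset Printing Implicit Defensive.
Import Order.TTheory GRing.Theory Num.Theory.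
Local Open Scope ring_scope.

(* Cut Z into the blocks [i M, (i + 1) M) with M = 4^(N+1) and, following any
   enumeration of Z, place b_i in block i so that b_i + E misses every
   translate b_j + E placed before.  A collision b_i + e1 = b_j + e2 forces
   j - i to be q or q + 1, where q = (e1 - e2) div M, so at most
   2 |E|^2 <= 2 4^N < M offsets of block i are excluded, whatever the other b_j
   are.  Property (iii) holds because z and b_(z div M) lie in the same block. *)

Section Greedy.

Variables (I X : Type) (idx : I -> nat) (elt : nat -> I).
Hypothesis idxK : cancel idx elt.

Variables (P : I -> X -> Prop) (clash : X -> X -> Prop).
Hypothesis clash_sym : forall x y, clash x y -> clash y x.

Variable dflt : I -> X.
Hypothesis P_dflt : forall i, P i (dflt i).

Variable choose : (I -> X) -> I -> X.
Hypothesis chooseP : forall f i, (forall j, P j (f j)) ->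
  P i (choose f i) /\ forall j, j <> i -> ~ clash (choose f i) (f j).

Definition extend (L : seq X) (j : I) : X := nth (dflt j) L (idx j).

Fixpoint stages (n : nat) : seq X :=
  if n is n'.+1 then rcons (stages n') (choose (extend (stages n')) (elt n'))
  else [::].

Definition greedy (i : I) : X := nth (dflt i) (stages (idx i).+1) (idx i).

Lemma size_stages n : size (stages n) = n.
Proof. by elim: n => //= n IHn; rewrite size_rcons IHn. Qed.

Lemma nth_stages m n x : (m < n)%N -> nth x (stages n) m = nth x (stages m.+1) m.
Proof.
elim: n => // n IHn; rewrite ltnS leq_eqVlt => /predU1P [-> // | lt_mn].
by rewrite /= nth_rcons size_stages lt_mn IHn.
Qed.

Lemma greedyE i : greedy i = choose (extend (stages (idx i))) i.
Proof. by rewrite /greedy /= nth_rcons size_stages ltnn eqxx idxK. Qed.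

Lemma extend_stages n j : (idx j < n)%N -> extend (stages n) j = greedy j.
Proof. exact: nth_stages. Qed.

Lemma extend_stagesP n j : P j (extend (stages n) j).
Proof.
elim: n j => [|n IHn] j; first by rewrite /extend nth_nil.
rewrite /extend /= nth_rcons size_stages.
case: ltngtP => [_ | _ | eq_jn]; [exact: IHn | exact: P_dflt |].
by rewrite -[j in P j]idxK eq_jn; case: (chooseP (elt n) IHn).
Qed.

Lemma greedyP i : P i (greedy i).
Proof. by rewrite greedyE; case: (chooseP i (extend_stagesP (idx i))). Qed.

Lemma greedy_no_clash i j : i <> j -> ~ clash (greedy i) (greedy j).
Proof.
have idx_inj : injective idx := can_inj idxK.
wlog lt_ji : i j / (idx j < idx i)%N => [hwlog neq_ij | neq_ij].
  case: (ltngtP (idx i) (idx j)) => [lt_ij | lt_ji | /idx_inj eq_ij //].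
  - by move=> /clash_sym; apply: hwlog => // eq_ji; rewrite eq_ji in neq_ij.
  - exact: hwlog.
have [_ no_clash] := chooseP i (extend_stagesP (idx i)).
by rewrite greedyE -(extend_stages lt_ji); apply: no_clash => eq_ji; apply: neq_ij.
Qed.

End Greedy.

Definition fresh (s : seq int) : nat :=
  find (fun c : nat => c%:Z \notin s) (iota 0 (size s).+1).

Lemma has_fresh (s : seq int) :
  has (fun c : nat => c%:Z \notin s) (iota 0 (size s).+1).
Proof.
apply/negPn/negP => /hasPn all_in.
have : (size (map Posz (iota 0 (size s).+1)) <= size s)%N.
  apply: uniq_leq_size; first by rewrite map_inj_uniq ?iota_uniq // => ? ? [].
  by move=> _ /mapP [c c_iota ->]; move: (all_in c c_iota); rewrite negbK.
by rewrite size_map size_iota ltnn.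
Qed.

Lemma fresh_le_size (s : seq int) : (fresh s <= size s)%N.
Proof. by rewrite -ltnS -[X in (_ < X)%N](size_iota 0) -has_find has_fresh. Qed.

Lemma fresh_notin (s : seq int) : (fresh s)%:Z \notin s.
Proof. by have := nth_find 0%N (has_fresh s); rewrite nth_iota // ltnS fresh_le_size. Qed.

Section Blocks.

Variable M : nat.

Definition in_block (i x : int) : bool := (i * M <= x) && (x < (i + 1) * M).

Lemma in_block_offset i (c : nat) : (c < M)%N -> in_block i (i * M + c).
Proof. by move=> lt_cM; apply/andP; split; lia. Qed.

Lemma in_block_sub i x y : in_block i x -> in_block i y -> - M%:Z < x - y < M.
Proof. by move=> /andP [? ?] /andP [? ?]; apply/andP; split; nia. Qed.

Hypothesis M_gt0 : (0 < M)%N.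

Lemma in_block_divz x : in_block (x %/ M)%Z x.
Proof.
have M_neq0 : M%:Z != 0 by rewrite eqz_nat -lt0n.
have := divz_eq x M; have := modz_ge0 x M_neq0; have := ltz_pmod x (M_gt0 : 0 < M%:Z).
by move=> ? ? ?; apply/andP; split; nia.
Qed.

Lemma in_block_collision i j x y : in_block i x -> in_block j y ->
  j - i - ((y - x) %/ M)%Z \in [:: 0; 1].
Proof.
move=> /andP [? ?] /andP [? ?]; move: (in_block_divz (y - x)) => /andP [].
set q := ((y - x) %/ M)%Z => ? ?.
by suff [-> | ->] : j - i - q = 0 \/ j - i - q = 1 by []; nia.
Qed.

End Blocks.

Section Translates.

Variables (M : nat) (E : seq int).

Definition clash (x y : int) : Prop :=
  exists e1 e2, [/\ e1 \in E, e2 \in E & x + e1 = y + e2].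

Definition diffs : seq int := [seq e1 - e2 | e1 <- E, e2 <- E].

(* Contains every offset c with i M + c + E meeting some f j + E, since only
   j = i + d div M + {0, 1} can contribute (in_block_collision). *)
Definition forbidden (f : int -> int) (i : int) : seq int :=
  [seq f (i + (d %/ M)%Z + t) - d - i * M | d <- diffs, t <- [:: 0; 1]].

Definition place (f : int -> int) (i : int) : int :=
  i * M + fresh (forbidden f i).

Lemma size_forbidden f i : size (forbidden f i) = (2 * size E ^ 2)%N.
Proof. by rewrite /forbidden !size_allpairs mulnC. Qed.

Hypothesis small_E : (2 * size E ^ 2 < M)%N.

Lemma placeP f i : (forall j, in_block M j (f j)) ->
  in_block M i (place f i) /\ forall j, ~ clash (place f i) (f j).
Proof.
move=> f_block.
have M_gt0 : (0 < M)%N by apply: leq_ltn_trans small_E.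
have place_block : in_block M i (place f i).
  by apply/in_block_offset/(leq_ltn_trans (fresh_le_size _)); rewrite size_forbidden.
split=> // j [e1 [e2 [e1E e2E collide]]].
have d_diffs : e1 - e2 \in diffs by apply: allpairs_f.
have := in_block_collision M_gt0 place_block (f_block j).
have -> : f j - place f i = e1 - e2 by lia.
move=> t_01; apply/negP: (fresh_notin (forbidden f i)); rewrite negbK.
apply/allpairsP; exists (e1 - e2, j - i - ((e1 - e2) %/ M)%Z); split=> //=.
set q := ((e1 - e2) %/ M)%Z; have -> : i + q + (j - i - q) = j by lia.
by rewrite /place in collide; lia.
Qed.

Lemma translates_in_blocks : exists b : int -> int,
  (forall i, in_block M i (b i)) /\ forall i j, i <> j -> ~ clash (b i) (b j).
Proof.
pose elt n : int := odflt 0 (choice.unpickle n).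
have pickle_eltK : cancel choice.pickle elt by move=> i; rewrite /elt choice.pickleK.
have clash_sym x y : clash x y -> clash y x.
  by case=> e1 [e2 [? ? collide]]; exists e2, e1.
have corner_block i : in_block M i (i * M).
  by rewrite -[X in in_block _ _ X]addr0; apply: in_block_offset; apply: leq_ltn_trans small_E.
have place_spec f i : (forall j, in_block M j (f j)) ->
    in_block M i (place f i) /\ forall j, j <> i -> ~ clash (place f i) (f j).
  by move=> /(placeP i) [place_block no_clash]; split=> // j _.
exists (greedy choice.pickle elt (fun i => i * M) place); split.
- exact: (greedyP (P := in_block M) pickle_eltK corner_block place_spec).
- exact: (greedy_no_clash (P := in_block M) pickle_eltK clash_sym corner_block place_spec).
Qed.

End Translates.

Theorem lemma3p1 (N : nat) (E : {fset int}) :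
  (0 < N)%N -> (#|` E|%fset <= 2 ^ N)%N ->
  exists b : int -> int,
    (* (i) the translates b_i + E are pairwise disjoint *)
    (forall i j : int, i != j ->
       forall e1 e2 : int, e1 \in E -> e2 \in E -> b i + e1 != b j + e2) /\
    (* (ii) b_i lies in [i 4^(N+1), (i+1) 4^(N+1)) *)
    (forall i : int,
       i * 4 ^+ N.+1 <= b i /\ b i < (i + 1) * 4 ^+ N.+1) /\
    (* (iii) Z is the union of n + B for -4^(N+1) <= n <= 4^(N+1) *)
    (forall z : int, exists n i : int,
       - 4 ^+ N.+1 <= n /\ n <= 4 ^+ N.+1 /\ z = n + b i).
Proof.
move=> _ card_E; set M := (4 ^ N.+1)%N.
have M_gt0 : (0 < M)%N by rewrite expn_gt0.
have small_E : (2 * size E ^ 2 < M)%N.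
  have sq_E : (size E ^ 2 <= 4 ^ N)%N.
    by rewrite -mulnn (expnMn 2 2 N) leq_mul.
  have pow_gt0 : (0 < 4 ^ N)%N by rewrite expn_gt0.
  by rewrite /M (expnS 4 N); lia.
have [b [b_block b_disj]] := translates_in_blocks small_E.
have -> : 4 ^+ N.+1 = M%:Z by rewrite -natz natrX.
exists b; split; [|split].
- move=> i j /eqP neq_ij e1 e2 e1E e2E; apply/eqP => collide.
  by apply: (b_disj i j neq_ij); exists e1, e2.
- by move=> i; apply/andP: (b_block i).
- move=> z; exists (z - b (z %/ M)%Z), (z %/ M)%Z.
  have /andP[] := in_block_sub (in_block_divz M_gt0 z) (b_block (z %/ M)%Z).
  by split; [|split]; lia.
Qed.
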